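(* For a length-$N$ steganographic code subject to distortion $D$ with zero probability of error (for any $\varepsilon>0$, $P(\phi_N(X^N,K)\ne M)\le\varepsilon$), the unicity distance $n_0$ for known-cover extracting attack and the unicity distance $n_1$ for stego-only extracting attack satisfy, for any given $\varepsilon>0$, \[ n_1\ \ge\ n_0\ \ge\ \frac{R_k}{C(D)-R_m+\varepsilon}, \] where $C(D)=\max_{q(x|\widetilde{x})\in Q}H(X|\widetilde{X})$ is the hiding capacity, $R_m=H(M)/N$ is the message rate and $R_k=H(K)/N$ is the key rate.
   Context: Model. $\mathcal{X}$ is a finite alphabet, $\mathcal{K}$ a finite key set. A distortion function is $d:\mathcal{X}\times\mathcal{X}\to[0,\infty)$, extended to $N$-tuples by averaging. A length-$N$ steganographic code subject to distortion $D$ is a triple $(\mathcal{M},f_N,\phi_N)$ with finite message set $\mathcal{M}$, embedding map $f_N:\mathcal{X}^N\times\mathcal{M}\times\mathcal{K}\to\mathcal{X}^N$ whose average distortion (averaged over cover distribution, uniform message and uniform key) is at most $D$, and extraction map $\phi_N(x^N,k)\in\mathcal{M}$. The cover $\widetilde{X}^N$ is i.i.d. from $P(\widetilde{x})$; the message $M$ is uniform and independent of the cover; the key $K$ is independent of message and cover; $X^N=f_N(\widetilde{X}^N,M,K)$. Admissible cover channels: $Q=\{q(x|\widetilde{x}):\sum_{\widetilde{x},x}d(\widetilde{x},x)q(x|\widetilde{x})P(\widetilde{x})\le D\}$, acting memorylessly on $N$-tuples. In an $n$-fold use, $n$ i.i.d. covers and messages are embedded with the same key. Given $n$ observed pairs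 of cover/stego objects, a key $k$ is possible if there is a message sequence of positive probability which, embedded with $k$ into the observed covers, yields the observed stego objects; the expected number of spurious keys $\overline{S}_n$ is the expectation of (number of possible keys $-1$). The unicity distance $n_0$ (known-cover attack) is the minimum number of cover/stego pairs with which the expected number of spurious stego keys equals zero; the unicity distance $n_1$ (stego-only attack) is the minimum number of stego objects with which the expected number of spurious stego keys equals zero (where possible keys are those consistent with the stego objects alone). Entropies are in bits. *)

From HB Require Import structures.
From mathcomp Require Import all_boot all_order all_algebra.
From mathcomp Require Import classical_sets boolp reals exp.
Set Implicit Arguments. Unset Strict Implicit. Unset Printing Implicit Defensive.
Import Order.TTheory GRing.Theory Num.Theory.
Local Open Scope ring_scope.
Local Open Scope classical_set_scope.

Section Steg.
Variable R : realType.

Definition log2 (x : R) : R := ln x / ln 2.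

Definition negxlog2 (t : R) : R := if t == 0 then 0 else - (t * log2 t).

Definition entropy (T : finType) (p : T -> R) : R := \sum_(x : T) negxlog2 (p x).

Definition uniform (T : finType) : T -> R := fun _ => (#|T|%:R)^-1.

Definition is_distr (T : finType) (p : T -> R) : Prop :=
  (forall x, 0 <= p x) /\ \sum_(x : T) p x = 1.

(* q xt x = q(x | xt) *)
Definition is_channel (X : finType) (q : X -> X -> R) : Prop :=
  forall xt, is_distr (q xt).

Definition channel_distortion (X : finType) (P : X -> R) (d : X -> X -> R)
  (q : X -> X -> R) : R :=
  \sum_(xt : X) \sum_(x : X) d xt x * q xt x * P xt.

Definition admissible_channels (X : finType) (P : X -> R) (d : X -> X -> R)
  (D : R) : set (X -> X -> R) :=
  [set q | is_channel q /\ channel_distortion P d q <= D].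

Definition cond_entropy (X : finType) (P : X -> R) (q : X -> X -> R) : R :=
  \sum_(xt : X) P xt * entropy (q xt).

(* hiding capacity C(D) = max_{q in Q} H(X | Xt) (the max is attained;
   written as the supremum) *)
Definition hiding_capacity (X : finType) (P : X -> R) (d : X -> X -> R)
  (D : R) : R :=
  sup [set cond_entropy P q | q in admissible_channels P d D].

Definition prodP (X : finType) (N : nat) (P : X -> R) (xs : N.-tuple X) : R :=
  \prod_(i < N) P (tnth xs i).

Definition distN (X : finType) (N : nat) (d : X -> X -> R)
  (xs ys : N.-tuple X) : R :=
  (N%:R)^-1 * \sum_(i < N) d (tnth xs i) (tnth ys i).

Section Code.
Variables (X K M : finType) (N : nat).
Variable f : N.-tuple X -> M -> K -> N.-tuple X.
Variable phi : N.-tuple X -> K -> M.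

Definition avg_distortion (P : X -> R) (d : X -> X -> R) : R :=
  \sum_(xs : N.-tuple X) \sum_(m : M) \sum_(k : K)
     prodP P xs * @uniform M m * @uniform K k * distN d xs (f xs m k).

Definition error_prob (P : X -> R) : R :=
  \sum_(xs : N.-tuple X) \sum_(m : M) \sum_(k : K)
     prodP P xs * @uniform M m * @uniform K k *
     (if phi (f xs m k) k != m then 1 else 0).

Definition seqprob (T : finType) (n : nat) (p : T -> R) (s : {ffun 'I_n -> T}) : R :=
  \prod_(i < n) p (s i).

Definition stego (n : nat) (cs : {ffun 'I_n -> N.-tuple X})
  (ms : {ffun 'I_n -> M}) (k : K) : {ffun 'I_n -> N.-tuple X} :=
  [ffun i => f (cs i) (ms i) k].

(* known-cover: key k' is possible for observed covers cs / stegos ss *)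
Definition possible_kc (n : nat) (cs ss : {ffun 'I_n -> N.-tuple X}) (k' : K) : bool :=
  [exists ms : {ffun 'I_n -> M},
     (0 < seqprob (@uniform M) ms) && (stego cs ms k' == ss)].

(* stego-only: key k' is possible for observed stegos ss *)
Definition possible_so (P : X -> R) (n : nat) (ss : {ffun 'I_n -> N.-tuple X})
  (k' : K) : bool :=
  [exists cs : {ffun 'I_n -> N.-tuple X}, exists ms : {ffun 'I_n -> M},
     [&& 0 < seqprob (prodP P) cs, 0 < seqprob (@uniform M) ms
       & stego cs ms k' == ss]].

Definition spurious_kc (P : X -> R) (n : nat) : R :=
  \sum_(k : K) \sum_(cs : {ffun 'I_n -> N.-tuple X}) \sum_(ms : {ffun 'I_n -> M})
    @uniform K k * seqprob (prodP P) cs * seqprob (@uniform M) ms *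
    ((#|[pred k' : K | possible_kc cs (stego cs ms k) k']|)%:R - 1).

Definition spurious_so (P : X -> R) (n : nat) : R :=
  \sum_(k : K) \sum_(cs : {ffun 'I_n -> N.-tuple X}) \sum_(ms : {ffun 'I_n -> M})
    @uniform K k * seqprob (prodP P) cs * seqprob (@uniform M) ms *
    ((#|[pred k' : K | possible_so P (stego cs ms k) k']|)%:R - 1).
End Code.

Definition is_unicity_distance (S : nat -> R) (n : nat) : Prop :=
  S n = 0 /\ forall m, S m = 0 -> (n <= m)%N.

End Steg.
Arguments uniform R T _ : clear implicits.

From HB Require Import structures.
From mathcomp Require Import all_boot all_order all_algebra.
From mathcomp Require Import classical_sets boolp reals exp.
From mathcomp Require Import ring.
Set Implicit Arguments. Unset Strict Implicit. Unset Printing Implicit Defensive.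
Import Order.TTheory GRing.Theory Num.Theory.
Local Open Scope ring_scope.

(* If n known cover/stego pairs leave no spurious key, then, the error probability
   being zero, the map (key, messages) |-> stego objects is injective on every
   cover sequence of positive probability.  Let q be the single-letter channel
   induced by the code: the law of a stego letter given its cover letter at a
   uniformly random position.  Gibbs' inequality, comparing the uniform law of
   (K, M^n) with the n-fold memoryless extension of q, gives
   H(K) + n H(M) <= n N H_q(X | Xt); q meets the distortion constraint, so
   H_q(X | Xt) <= C(D), which rearranges into the bound on n0.  A key possible
   from the stego objects and covers is possible from the stego objects alone,
   so there are fewer spurious keys in the known-cover attack and n0 <= n1. *)

Lemma ln2_gt0 {R : realType} : 0 < ln (2 : R).
Proof. by rewrite ln_gt0 // ltr1n. Qed.

Section NonnegSums.
Variable R : numDomainType.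

Lemma ler_sum_term (I : finType) (F : I -> R) i :
  (forall j, 0 <= F j) -> F i <= \sum_j F j.
Proof. by move=> F_ge0; rewrite (bigD1 i) //= lerDl sumr_ge0. Qed.

Lemma psum3_eq0 (I J L : finType) (F : I -> J -> L -> R) :
  (forall a b c, 0 <= F a b c) -> \sum_a \sum_b \sum_c F a b c = 0 ->
  forall a b c, F a b c = 0.
Proof.
move=> F_ge0 F0 a b c.
have sum_ge0 a' : 0 <= \sum_b' \sum_c' F a' b' c'.
  by do 2!apply: sumr_ge0 => ? _.
have Fa0 := @psumr_eq0P _ _ _ _ (fun a' _ => sum_ge0 a') F0 a isT.
have Fab0 := @psumr_eq0P _ _ _ _ (fun b' _ => sumr_ge0 _ (fun c' _ => F_ge0 a b' c')) Fa0 b isT.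
exact: @psumr_eq0P _ _ _ _ (fun c' _ => F_ge0 a b c') Fab0 c isT.
Qed.

Lemma prodr_gt0_factor (I : finType) (F : I -> R) i :
  (forall j, 0 <= F j) -> 0 < \prod_j F j -> 0 < F i.
Proof.
move=> F_ge0 /gt_eqF/negbT/prodf_neq0 F_neq0.
by rewrite lt_def F_ge0 F_neq0.
Qed.

Lemma ler_sum_inj (I J : finType) (h : I -> J) (F : J -> R) :
  injective h -> (forall j, 0 <= F j) -> \sum_i F (h i) <= \sum_j F j.
Proof.
move=> h_inj F_ge0; rewrite -(big_imset F (in2W h_inj)) /=.
by rewrite [leRHS](bigID (mem (h @: I))) /= lerDl sumr_ge0.
Qed.

Lemma sum_indicator (T : finType) (a : T) (F : T -> R) :
  \sum_t (a == t)%:R * F t = F a.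
Proof.
rewrite (bigD1 a) //= eqxx mul1r big1 ?addr0 // => t t_neq_a.
by rewrite eq_sym (negbTE t_neq_a) mul0r.
Qed.

End NonnegSums.

Section Logarithm.
Variable R : realType.

Lemma ln_le_subr1 (y : R) : 0 < y -> ln y <= y - 1.
Proof. by move=> y0; rewrite -[in ln y](subrKC 1 y) le_ln1Dx // ltrBrDl subrr. Qed.

Lemma ln_prod (I : finType) (F : I -> R) :
  (forall i, 0 < F i) -> ln (\prod_i F i) = \sum_i ln (F i).
Proof.
move=> F_gt0; suff [] : 0 < \prod_i F i /\ ln (\prod_i F i) = \sum_i ln (F i) by [].
apply: (big_ind2 (fun a b => 0 < a /\ ln a = b)) => [|a b c e [a0 <-] [c0 <-]|i _].
- by rewrite ln1.
- by rewrite mulr_gt0 // lnM.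
- by [].
Qed.

Lemma log2M (x y : R) : 0 < x -> 0 < y -> log2 (x * y) = log2 x + log2 y.
Proof. by move=> x0 y0; rewrite /log2 lnM ?posrE // mulrDl. Qed.

Lemma log2Xn n (x : R) : 0 < x -> log2 (x ^+ n) = n%:R * log2 x.
Proof. by move=> x0; rewrite /log2 lnXn // mulr_natl mulrnAl. Qed.

Lemma log2_prod (I : finType) (F : I -> R) :
  (forall i, 0 < F i) -> log2 (\prod_i F i) = \sum_i log2 (F i).
Proof. by move=> F_gt0; rewrite /log2 ln_prod // mulr_suml. Qed.

Lemma log2_ge0 (x : R) : 1 <= x -> 0 <= log2 x.
Proof. by move=> x1; rewrite divr_ge0 ?ln_ge0 // ler1n. Qed.

End Logarithm.

Section Entropy.
Variable R : realType.

Lemma uniform_gt0 (T : finType) (t : T) : 0 < uniform R T t.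
Proof. by rewrite /uniform invr_gt0 ltr0n; apply/card_gt0P; exists t. Qed.

Lemma seqprob_uniform_gt0 (T : finType) n (s : {ffun 'I_n -> T}) :
  0 < seqprob (uniform R T) s.
Proof. by apply: prodr_gt0 => i _; exact: uniform_gt0. Qed.

Lemma sum_uniform (T : finType) : (0 < #|T|)%N -> \sum_t uniform R T t = 1.
Proof.
move=> T_gt0; rewrite sumr_const -[#|xpredT|]/#|T| -[_^-1 *+ _]mulr_natr.
by rewrite mulVf // pnatr_eq0 -lt0n.
Qed.

Lemma entropy_uniform (T : finType) :
  (0 < #|T|)%N -> entropy (uniform R T) = log2 #|T|%:R.
Proof.
move=> T_gt0; have cardT : 0 < (#|T|%:R : R) by rewrite ltr0n.
rewrite /entropy /negxlog2 /uniform invr_eq0 gt_eqF // sumr_const /log2.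
rewrite lnV ?posrE // -[#|xpredT|]/#|T| -mulr_natl.
by field; rewrite !gt_eqF // ln2_gt0.
Qed.

Lemma gibbs_inequality (I : finType) (p r : I -> R) :
  (forall i, 0 < p i) -> \sum_i p i = 1 ->
  (forall i, 0 < r i) -> \sum_i r i <= 1 ->
  entropy p <= \sum_i p i * - log2 (r i).
Proof.
move=> p_gt0 p1 r_gt0 r_le1.
have pointwise i : negxlog2 (p i) <= p i * - log2 (r i) + (r i - p i) / ln 2.
  have p0 := p_gt0 i; have r0 := r_gt0 i.
  have ineq : p i * (ln (r i) - ln (p i)) <= r i - p i.
    have := ln_le_subr1 (divr_gt0 r0 p0).
    rewrite lnM ?posrE ?invr_gt0 // lnV ?posrE // -(ler_pM2l p0).
    by rewrite mulrBr mulrBr mulr1 mulrCA mulfV ?gt_eqF ?mulr1.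
  rewrite /negxlog2 gt_eqF // -subr_ge0.
  have -> : p i * - log2 (r i) + (r i - p i) / ln 2 - - (p i * log2 (p i)) =
            (r i - p i - p i * (ln (r i) + - ln (p i))) / ln 2.
    by rewrite /log2; field; rewrite gt_eqF // ln2_gt0.
  by rewrite divr_ge0 ?subr_ge0 // ltW // ln2_gt0.
apply: (le_trans (ler_sum _ (fun i _ => pointwise i))).
rewrite big_split /= -mulr_suml sumrB p1 gerDl.
by rewrite pmulr_lle0 ?invr_gt0 ?ln2_gt0 // subr_le0.
Qed.

End Entropy.

Section Capacity.
Variables (R : realType) (X : finType) (P : X -> R).
Hypothesis P_distr : is_distr P.

Lemma negxlog2_le (t : R) : 0 <= t -> negxlog2 t <= (ln 2)^-1.
Proof.
move=> t_ge0; rewrite /negxlog2; have [_|t_neq0] := eqVneq t 0.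
  by rewrite invr_ge0 ltW // ln2_gt0.
have t_gt0 : 0 < t by rewrite lt_def t_neq0.
have tV_gt0 : 0 < t^-1 by rewrite invr_gt0.
have := ln_le_subr1 tV_gt0; rewrite lnV ?posrE // -(ler_pM2l t_gt0).
rewrite mulrBr mulfV ?gt_eqF // mulr1 => ineq.
rewrite /log2 mulrA -mulNr -[leRHS]mul1r ler_pM2r ?invr_gt0 ?ln2_gt0 // -mulrN.
by rewrite (le_trans ineq) // gerBl.
Qed.

Lemma cond_entropy_le q : is_channel q -> cond_entropy P q <= #|X|%:R / ln 2.
Proof.
move=> q_chan; rewrite /cond_entropy.
apply: (@le_trans _ _ (\sum_xt P xt * (#|X|%:R / ln 2))); last first.
  by rewrite -mulr_suml (proj2 P_distr) mul1r.
apply: ler_sum => xt _; rewrite ler_wpM2l ?(proj1 P_distr) //.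
rewrite -sum1_card natr_sum mulr_suml.
by apply: ler_sum => x _; rewrite mul1r negxlog2_le //; case: (q_chan xt).
Qed.

Lemma cond_entropy_le_capacity (d : X -> X -> R) (D : R) q :
  admissible_channels P d D q -> cond_entropy P q <= hiding_capacity P d D.
Proof.
move=> q_adm; apply: sup_upper_bound; last by exists q.
split; first by exists (cond_entropy P q), q.
by exists (#|X|%:R / ln 2) => _ [q' [q'_chan _] <-]; exact: cond_entropy_le.
Qed.

End Capacity.

Section ProductSums.
Variables (R : realType) (T : finType) (n : nat).

Lemma sum_tuple_ffun (F : n.-tuple T -> R) :
  \sum_t F t = \sum_(s : {ffun 'I_n -> T}) F (tuple_of_finfun s).
Proof.
rewrite (reindex (@tuple_of_finfun T n)) //.
by exists (@finfun_of_tuple T n) => s _; [exact: tuple_of_finfunK | exact: finfun_of_tupleK].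
Qed.

Lemma sum_tuple_prod (F : 'I_n -> T -> R) :
  \sum_(t : n.-tuple T) \prod_i F i (tnth t i) = \prod_i \sum_x F i x.
Proof.
rewrite sum_tuple_ffun bigA_distr_bigA.
by apply: eq_bigr => s _; apply: eq_bigr => i _; rewrite tnth_mktuple.
Qed.

Lemma prodP_tuple_of_finfun (p : T -> R) (s : {ffun 'I_n -> T}) :
  prodP p (tuple_of_finfun s) = seqprob p s.
Proof. by apply: eq_bigr => i _; rewrite tnth_mktuple. Qed.

Variable p : T -> R.
Hypothesis p1 : \sum_t p t = 1.

Lemma sum_seqprob : \sum_(s : {ffun 'I_n -> T}) seqprob p s = 1.
Proof. by rewrite -(bigA_distr_bigA (fun _ => p)) big1. Qed.

Lemma sum_prodP : \sum_(t : n.-tuple T) prodP p t = 1.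
Proof. by rewrite sum_tuple_ffun -sum_seqprob; under eq_bigr do rewrite prodP_tuple_of_finfun. Qed.

Lemma seqprob_marginal (H : T -> R) (j : 'I_n) :
  \sum_(s : {ffun 'I_n -> T}) seqprob p s * H (s j) = \sum_t p t * H t.
Proof.
pose F i t := if i == j then p t * H t else p t.
transitivity (\sum_(s : {ffun 'I_n -> T}) \prod_i F i (s i)).
  apply: eq_bigr => s _; rewrite /seqprob (bigD1 j) //= [RHS](bigD1 j) //= /F eqxx.
  by rewrite mulrAC; congr (_ * _); apply: eq_bigr => i ij; rewrite (negbTE ij).
rewrite -(bigA_distr_bigA F) (bigD1 j) //= [X in _ * X]big1 ?mulr1 => [|i ij].
  by apply: eq_bigr => x _; rewrite /F eqxx.
by under eq_bigr do rewrite /F (negbTE ij).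
Qed.

Lemma prodP_marginal (H : T -> R) (j : 'I_n) :
  \sum_(t : n.-tuple T) prodP p t * H (tnth t j) = \sum_x p x * H x.
Proof.
rewrite sum_tuple_ffun -(seqprob_marginal H j).
by apply: eq_bigr => s _; rewrite prodP_tuple_of_finfun tnth_mktuple.
Qed.

End ProductSums.

Definition block_channel (R : realType) (X : finType) (N : nat) (q : X -> X -> R)
  n (cs ss : {ffun 'I_n -> N.-tuple X}) : R :=
  \prod_j \prod_i q (tnth (cs j) i) (tnth (ss j) i).

Lemma sum_block_channel (R : realType) (X : finType) (N : nat) (q : X -> X -> R)
  n (cs : {ffun 'I_n -> N.-tuple X}) :
  is_channel q -> \sum_ss block_channel q cs ss = 1.
Proof.
move=> q_chan; rewrite /block_channel.
rewrite -(bigA_distr_bigA (fun j (t : N.-tuple X) => \prod_i q (tnth (cs j) i) (tnth t i))).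
rewrite big1 // => j _.
rewrite (sum_tuple_prod (fun i => q (tnth (cs j) i))) big1 // => i _.
by case: (q_chan (tnth (cs j) i)).
Qed.

Section Code.
Variables (R : realType) (X K M : finType) (N : nat) (P : X -> R).
Variable f : N.-tuple X -> M -> K -> N.-tuple X.
Hypotheses (N_gt0 : (0 < N)%N) (M_gt0 : (0 < #|M|)%N) (K_gt0 : (0 < #|K|)%N).
Hypothesis P_distr : is_distr P.

Local Notation uM := (uniform R M).
Local Notation uK := (uniform R K).

Lemma prodP_ge0 n (xs : n.-tuple X) : 0 <= prodP P xs.
Proof. by apply: prodr_ge0 => i _; case: P_distr. Qed.

Definition code_mean (F : N.-tuple X -> M -> K -> R) : R :=
  \sum_xs \sum_m \sum_k prodP P xs * uM m * uK k * F xs m k.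

Lemma code_meanZ c F : c * code_mean F = code_mean (fun xs m k => c * F xs m k).
Proof.
rewrite /code_mean mulr_sumr; apply: eq_bigr => xs _; rewrite mulr_sumr.
apply: eq_bigr => m _; rewrite mulr_sumr; apply: eq_bigr => k _; exact: mulrCA.
Qed.

Lemma code_mean_sum (I : finType) (F : I -> N.-tuple X -> M -> K -> R) :
  \sum_i code_mean (F i) = code_mean (fun xs m k => \sum_i F i xs m k).
Proof.
rewrite /code_mean exchange_big; apply: eq_bigr => xs _; rewrite exchange_big.
apply: eq_bigr => m _; rewrite exchange_big; apply: eq_bigr => k _.
by rewrite mulr_sumr.
Qed.

Lemma code_mean_cover (F : N.-tuple X -> R) :
  code_mean (fun xs _ _ => F xs) = \sum_xs prodP P xs * F xs.
Proof.
apply: eq_bigr => xs _.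
rewrite -[RHS]mul1r -{1}(sum_uniform R M_gt0) mulr_suml; apply: eq_bigr => m _.
rewrite -[RHS]mul1r -{1}(sum_uniform R K_gt0) mulr_suml; apply: eq_bigr => k _.
by ring.
Qed.

Lemma code_weight_ge0 (xs : N.-tuple X) (m : M) (k : K) : 0 <= prodP P xs * uM m * uK k.
Proof. by rewrite !mulr_ge0 ?prodP_ge0 // ltW // uniform_gt0. Qed.

Lemma code_mean_ge0 F : (forall xs m k, 0 <= F xs m k) -> 0 <= code_mean F.
Proof. by move=> F_ge0; do 3!apply: sumr_ge0 => ? _; rewrite mulr_ge0 ?code_weight_ge0. Qed.

Lemma code_mean_eq0 F : (forall xs m k, 0 <= F xs m k) -> code_mean F = 0 ->
  forall xs m k, 0 < prodP P xs -> F xs m k = 0.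
Proof.
move=> F_ge0 F0 xs m k xs_gt0.
have /eqP := psum3_eq0 (fun xs m k => mulr_ge0 (code_weight_ge0 xs m k) (F_ge0 xs m k)) F0 xs m k.
by rewrite !mulf_eq0 (gt_eqF xs_gt0) !(gt_eqF (uniform_gt0 _ _)) => /eqP.
Qed.

Lemma code_mean_gt0 F xs m k : (forall xs m k, 0 <= F xs m k) ->
  0 < prodP P xs -> 0 < F xs m k -> 0 < code_mean F.
Proof.
move=> F_ge0 xs_gt0 F_gt0; rewrite lt_def code_mean_ge0 // andbT.
by apply/eqP => /(code_mean_eq0 F_ge0)/(_ xs m k xs_gt0) F0; rewrite F0 ltxx in F_gt0.
Qed.

Lemma eq_code_mean F G :
  (forall xs m k, F xs m k = G xs m k) -> code_mean F = code_mean G.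
Proof.
by move=> FG; apply: eq_bigr => xs _; apply: eq_bigr => m _; apply: eq_bigr => k _; rewrite FG.
Qed.

Definition letter_joint xt x : R := code_mean (fun xs m k =>
  N%:R^-1 * \sum_i (tnth xs i == xt)%:R * (tnth (f xs m k) i == x)%:R).

Lemma sum_letter_joint_weighted (h : X -> X -> R) :
  \sum_xt \sum_x letter_joint xt x * h xt x =
  code_mean (fun xs m k => N%:R^-1 * \sum_i h (tnth xs i) (tnth (f xs m k) i)).
Proof.
under eq_bigr do under eq_bigr do rewrite mulrC code_meanZ.
under eq_bigr do rewrite code_mean_sum.
rewrite code_mean_sum; apply: eq_code_mean => xs m k.
under eq_bigr do under eq_bigr do rewrite mulrCA mulr_sumr.
under eq_bigr do rewrite -big_distrr /= exchange_big.
rewrite -big_distrr /= exchange_big; congr (_ * _); apply: eq_bigr => i _.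
under eq_bigr do under eq_bigr do rewrite mulrC -mulrA.
under eq_bigr do rewrite -big_distrr /= sum_indicator.
by rewrite sum_indicator.
Qed.

Lemma sum_letter_joint xt : \sum_x letter_joint xt x = P xt.
Proof.
have := sum_letter_joint_weighted (fun a _ => (xt == a)%:R).
under eq_bigr do rewrite -big_distrl /= mulrC.
rewrite sum_indicator => ->; rewrite (code_mean_cover (fun xs => _)).
under eq_bigr do rewrite mulrCA mulr_sumr.
rewrite -big_distrr /= exchange_big /=.
under eq_bigr do rewrite (prodP_marginal (proj2 P_distr) (fun t => (xt == t)%:R)).
under eq_bigr do under eq_bigr do rewrite mulrC.
under eq_bigr do rewrite sum_indicator.
by rewrite sumr_const card_ord -[P xt *+ _]mulr_natl mulKf // pnatr_eq0 -lt0n.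
Qed.

Lemma letter_joint_ge0 xt x : 0 <= letter_joint xt x.
Proof.
apply: code_mean_ge0 => xs m k; rewrite mulr_ge0 ?invr_ge0 ?ler0n ?sumr_ge0 //.
by move=> i _; rewrite mulr_ge0 ?ler0n.
Qed.

Lemma letter_joint_eq0 xt x : P xt = 0 -> letter_joint xt x = 0.
Proof.
by rewrite -sum_letter_joint => /psumr_eq0P; apply => // x' _; exact: letter_joint_ge0.
Qed.

(* At cover letters of probability zero any distribution will do. *)
Definition code_channel xt x : R :=
  if P xt == 0 then #|X|%:R^-1 else letter_joint xt x / P xt.

Lemma mul_code_channel xt x : code_channel xt x * P xt = letter_joint xt x.
Proof.
rewrite /code_channel; have [P0|P_neq0] := eqVneq (P xt) 0.
  by rewrite P0 mulr0 letter_joint_eq0.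
by rewrite divfK.
Qed.

Lemma code_channel_is_channel : is_channel code_channel.
Proof.
move=> xt; rewrite /code_channel; have [P0|P_neq0] := eqVneq (P xt) 0.
  by split=> [x|]; [rewrite invr_ge0 ler0n | apply/sum_uniform/card_gt0P; exists xt].
split=> [x|]; last by rewrite -mulr_suml sum_letter_joint mulfV.
by rewrite divr_ge0 ?letter_joint_ge0 //; case: P_distr.
Qed.

Lemma code_channel_admissible (d : X -> X -> R) (D : R) :
  avg_distortion f P d <= D -> admissible_channels P d D code_channel.
Proof.
split; first exact: code_channel_is_channel.
rewrite /channel_distortion.
under eq_bigr do under eq_bigr do rewrite -mulrA mul_code_channel mulrC.
by rewrite sum_letter_joint_weighted.
Qed.

Definition stego_surprisal xs m k : R :=
  \sum_i - log2 (code_channel (tnth xs i) (tnth (f xs m k) i)).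

Lemma cond_entropy_code_channel :
  N%:R * cond_entropy P code_channel = code_mean stego_surprisal.
Proof.
have pointwise xt x : P xt * negxlog2 (code_channel xt x) =
                      letter_joint xt x * - log2 (code_channel xt x).
  rewrite -mul_code_channel /negxlog2.
  by case: eqVneq => [->|_]; rewrite ?mulr0 ?mul0r // !mulrN mulrCA mulrA.
rewrite /cond_entropy; under eq_bigr do rewrite mulr_sumr.
under eq_bigr do under eq_bigr do rewrite pointwise.
rewrite sum_letter_joint_weighted code_meanZ; apply: eq_code_mean => xs m k.
by rewrite mulrA mulfV ?mul1r // pnatr_eq0 -lt0n.
Qed.

Lemma letter_joint_gt0 xs m k i :
  0 < prodP P xs -> 0 < letter_joint (tnth xs i) (tnth (f xs m k) i).
Proof.
move=> xs_gt0; apply: (@code_mean_gt0 _ xs m k) => // [xs' m' k'|].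
  by rewrite mulr_ge0 ?invr_ge0 ?ler0n ?sumr_ge0 // => i' _; rewrite mulr_ge0 ?ler0n.
rewrite mulr_gt0 ?invr_gt0 ?ltr0n // (lt_le_trans _ (ler_sum_term i _)) ?eqxx ?mulr1 //.
by move=> j; rewrite mulr_ge0 ?ler0n.
Qed.

Lemma code_channel_gt0 xs m k i :
  0 < prodP P xs -> 0 < code_channel (tnth xs i) (tnth (f xs m k) i).
Proof.
move=> xs_gt0; have Pi_gt0 : 0 < P (tnth xs i).
  by apply: prodr_gt0_factor xs_gt0 => j; case: P_distr.
by rewrite /code_channel gt_eqF // divr_gt0 // letter_joint_gt0.
Qed.

Lemma seqprob_prodP_ge0 n (cs : {ffun 'I_n -> N.-tuple X}) : 0 <= seqprob (prodP P) cs.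
Proof. by apply: prodr_ge0 => j _; exact: prodP_ge0. Qed.

Lemma nfold_weight_ge0 n k (cs : {ffun 'I_n -> N.-tuple X}) (ms : {ffun 'I_n -> M}) :
  0 <= uK k * seqprob (prodP P) cs * seqprob uM ms.
Proof.
by rewrite !mulr_ge0 ?seqprob_prodP_ge0 // ltW ?uniform_gt0 ?seqprob_uniform_gt0.
Qed.

Lemma possible_kc_stego n (cs : {ffun 'I_n -> N.-tuple X}) ms k :
  possible_kc R f cs (stego f cs ms k) k.
Proof. by apply/existsP; exists ms; rewrite seqprob_uniform_gt0 eqxx. Qed.

Lemma spurious_kc_summand_ge0 n k (cs : {ffun 'I_n -> N.-tuple X}) ms :
  0 <= uK k * seqprob (prodP P) cs * seqprob uM ms *
       ((#|[pred k' | possible_kc R f cs (stego f cs ms k) k']|)%:R - 1).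
Proof.
rewrite mulr_ge0 ?nfold_weight_ge0 //.
by rewrite subr_ge0 ler1n; apply/card_gt0P; exists k; exact: possible_kc_stego.
Qed.

Lemma spurious_kc_ge0 n : 0 <= spurious_kc f P n.
Proof. by do 3!apply: sumr_ge0 => ? _; exact: spurious_kc_summand_ge0. Qed.

Lemma spurious_kc_le_so n : spurious_kc f P n <= spurious_so f P n.
Proof.
apply: ler_sum => k _; apply: ler_sum => cs _; apply: ler_sum => ms _.
have [cs0|cs_neq0] := eqVneq (seqprob (prodP P) cs) 0; first by rewrite cs0 mulr0 !mul0r.
have cs_gt0 : 0 < seqprob (prodP P) cs by rewrite lt_def cs_neq0 seqprob_prodP_ge0.
rewrite ler_wpM2l ?nfold_weight_ge0 // lerB // ler_nat.
apply/subset_leq_card/fintype.subsetP => k'; rewrite !inE.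
by case/existsP => ms' ms'_ok; apply/existsP; exists cs; apply/existsP; exists ms'; rewrite cs_gt0.
Qed.

Lemma spurious_kc_eq0_unique_key n (cs : {ffun 'I_n -> N.-tuple X}) ms k k' :
  spurious_kc f P n = 0 -> 0 < seqprob (prodP P) cs ->
  possible_kc R f cs (stego f cs ms k) k' -> k' = k.
Proof.
move=> S0 cs_gt0 k'_ok.
have /eqP := psum3_eq0 (@spurious_kc_summand_ge0 n) S0 k cs ms.
rewrite mulf_eq0 !mulf_eq0 (gt_eqF cs_gt0) (gt_eqF (uniform_gt0 _ _)).
rewrite (gt_eqF (seqprob_uniform_gt0 _ _)) /= subr_eq0 pnatr_eq1 => /card1P [k0 keys].
have /eqP -> : k' \in pred1 k0 by rewrite -keys inE.
by apply/esym/eqP; rewrite -[_ == _]/(k \in pred1 k0) -keys inE possible_kc_stego.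
Qed.

Lemma decode_correct (phi : N.-tuple X -> K -> M) :
  (forall eps : R, 0 < eps -> error_prob f phi P <= eps) ->
  forall xs m k, 0 < prodP P xs -> phi (f xs m k) k = m.
Proof.
pose err xs m k : R := if phi (f xs m k) k != m then 1 else 0.
have err_ge0 xs m k : 0 <= err xs m k by rewrite /err; case: ifP.
move=> small_err xs m k xs_gt0.
have err0 : code_mean err = 0.
  apply/le_anti; rewrite code_mean_ge0 // andbT.
  by apply/ler_addgt0Pr => e e_gt0; rewrite add0r small_err.
have := code_mean_eq0 err_ge0 err0 m k xs_gt0; rewrite /err.
by case: eqVneq => // _ /eqP; rewrite oner_eq0.
Qed.

Lemma stego_injective (phi : N.-tuple X -> K -> M) n (cs : {ffun 'I_n -> N.-tuple X}) :
  (forall xs m k, 0 < prodP P xs -> phi (f xs m k) k = m) ->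
  spurious_kc f P n = 0 -> 0 < seqprob (prodP P) cs ->
  injective (fun km : K * {ffun 'I_n -> M} => stego f cs km.2 km.1).
Proof.
move=> decode S0 cs_gt0 [k ms] [k' ms'] /= same_stego.
have k'_ok : possible_kc R f cs (stego f cs ms k) k'.
  by rewrite same_stego possible_kc_stego.
have k'_k := spurious_kc_eq0_unique_key S0 cs_gt0 k'_ok; subst k'; congr pair.
apply/ffunP => j; have /ffunP/(_ j) := same_stego; rewrite !ffunE => same_j.
have csj_gt0 : 0 < prodP P (cs j).
  by apply: prodr_gt0_factor cs_gt0 => i; exact: prodP_ge0.
by rewrite -(decode _ (ms j) k csj_gt0) same_j decode.
Qed.

Lemma block_channel_stego n (cs : {ffun 'I_n -> N.-tuple X}) ms k :
  0 < seqprob (prodP P) cs ->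
  - log2 (block_channel code_channel cs (stego f cs ms k)) =
  \sum_j stego_surprisal (cs j) (ms j) k.
Proof.
move=> cs_gt0; have csj_gt0 j : 0 < prodP P (cs j).
  by apply: prodr_gt0_factor cs_gt0 => i; exact: prodP_ge0.
rewrite log2_prod => [|j]; last by apply: prodr_gt0 => i _; rewrite ffunE code_channel_gt0.
rewrite -sumrN; apply: eq_bigr => j _.
rewrite log2_prod => [|i]; last by rewrite ffunE code_channel_gt0.
by rewrite -sumrN; apply: eq_bigr => i _; rewrite ffunE.
Qed.

Lemma uniform_key_messages n k (ms : {ffun 'I_n -> M}) :
  uniform R (K * {ffun 'I_n -> M})%type (k, ms) = uK k * seqprob uM ms.
Proof.
rewrite /uniform /seqprob prodr_const card_ord card_prod card_ffun card_ord.
by rewrite natrM natrX invfM exprVn.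
Qed.

(* Gibbs' inequality against the block channel: by injectivity, the channel
   probabilities of the stego objects sum to at most 1. *)
Lemma key_messages_entropy_le n (cs : {ffun 'I_n -> N.-tuple X}) :
  0 < seqprob (prodP P) cs ->
  injective (fun km : K * {ffun 'I_n -> M} => stego f cs km.2 km.1) ->
  log2 #|K|%:R + n%:R * log2 #|M|%:R <=
  \sum_k \sum_ms uK k * seqprob uM ms * \sum_j stego_surprisal (cs j) (ms j) k.
Proof.
move=> cs_gt0 stego_inj.
pose r (km : K * {ffun 'I_n -> M}) := block_channel code_channel cs (stego f cs km.2 km.1).
have r_gt0 km : 0 < r km.
  apply: prodr_gt0 => j _; apply: prodr_gt0 => i _; rewrite ffunE code_channel_gt0 //.
  by apply: prodr_gt0_factor cs_gt0 => j'; exact: prodP_ge0.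
have r_le1 : \sum_km r km <= 1.
  rewrite -(sum_block_channel cs code_channel_is_channel).
  apply: (ler_sum_inj stego_inj) => ss.
  apply: prodr_ge0 => j _; apply: prodr_ge0 => i _.
  by case: (code_channel_is_channel (tnth (cs j) i)).
have card_gt0 : (0 < #|{: K * {ffun 'I_n -> M}}|)%N.
  by rewrite card_prod card_ffun muln_gt0 K_gt0 expn_gt0 M_gt0.
have := gibbs_inequality (@uniform_gt0 _ _) (sum_uniform _ card_gt0) r_gt0 r_le1.
rewrite entropy_uniform // card_prod card_ffun card_ord natrM natrX.
rewrite log2M ?exprn_gt0 ?ltr0n // log2Xn ?ltr0n // => /le_trans; apply.
rewrite pair_bigA /=; apply: ler_sum => -[k ms] _.
by rewrite uniform_key_messages block_channel_stego.
Qed.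

Lemma code_mean_block n (j : 'I_n) (F : N.-tuple X -> M -> K -> R) :
  \sum_(cs : {ffun 'I_n -> N.-tuple X}) seqprob (prodP P) cs *
    (\sum_k \sum_(ms : {ffun 'I_n -> M}) uK k * seqprob uM ms * F (cs j) (ms j) k) =
  code_mean F.
Proof.
transitivity (\sum_(cs : {ffun 'I_n -> N.-tuple X}) seqprob (prodP P) cs *
                (\sum_k uK k * \sum_m uM m * F (cs j) m k)).
  apply: eq_bigr => cs _; congr (_ * _); apply: eq_bigr => k _.
  rewrite -(seqprob_marginal (sum_uniform R M_gt0) (fun m => F (cs j) m k) j) mulr_sumr.
  by apply: eq_bigr => ms _; rewrite mulrA.
rewrite (seqprob_marginal (sum_prodP N (proj2 P_distr))
                          (fun xs => \sum_k uK k * \sum_m uM m * F xs m k)).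
apply: eq_bigr => xs _; rewrite mulr_sumr [RHS]exchange_big /=; apply: eq_bigr => k _.
by rewrite !mulr_sumr; apply: eq_bigr => m _; ring.
Qed.

Lemma code_mean_nfold n (F : N.-tuple X -> M -> K -> R) :
  \sum_(cs : {ffun 'I_n -> N.-tuple X}) seqprob (prodP P) cs *
    (\sum_k \sum_(ms : {ffun 'I_n -> M}) uK k * seqprob uM ms * \sum_j F (cs j) (ms j) k) =
  n%:R * code_mean F.
Proof.
under eq_bigr do under eq_bigr do under eq_bigr do rewrite mulr_sumr.
under eq_bigr do under eq_bigr do rewrite exchange_big.
under eq_bigr do rewrite exchange_big mulr_sumr.
rewrite exchange_big /=; under eq_bigr do rewrite code_mean_block.
by rewrite sumr_const card_ord mulr_natl.
Qed.

Lemma spurious_kc_eq0_entropy_le (phi : N.-tuple X -> K -> M) n :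
  (forall eps : R, 0 < eps -> error_prob f phi P <= eps) -> spurious_kc f P n = 0 ->
  log2 #|K|%:R + n%:R * log2 #|M|%:R <= n%:R * (N%:R * cond_entropy P code_channel).
Proof.
move=> small_err S0; rewrite cond_entropy_code_channel -code_mean_nfold.
rewrite -[leLHS]mul1r -{1}(sum_seqprob n (sum_prodP N (proj2 P_distr))) mulr_suml.
apply: ler_sum => cs _.
have [cs0|cs_neq0] := eqVneq (seqprob (prodP P) cs) 0; first by rewrite cs0 !mul0r.
have cs_gt0 : 0 < seqprob (prodP P) cs by rewrite lt_def cs_neq0 seqprob_prodP_ge0.
rewrite ler_wpM2l ?seqprob_prodP_ge0 //; apply: (key_messages_entropy_le cs_gt0).
exact: stego_injective (decode_correct small_err) S0 cs_gt0.
Qed.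
End Code.

Lemma rate_ratio_le (R : realFieldType) (hk hm c eps Nr n : R) :
  0 <= hk -> 0 < Nr -> 0 < eps -> 0 <= n ->
  hk + n * hm <= n * (Nr * c) -> hk / Nr / (c - hm / Nr + eps) <= n.
Proof.
move=> hk_ge0 Nr_gt0 eps_gt0 n_ge0 bound.
have rate : hk / Nr <= n * (c - hm / Nr).
  rewrite -subr_ge0 (_ : _ - _ = (n * (Nr * c) - (hk + n * hm)) / Nr).
    by rewrite divr_ge0 ?subr_ge0 // ltW.
  by field; rewrite gt_eqF.
have [den_gt0|den_le0] := ltrP 0 (c - hm / Nr + eps).
  rewrite ler_pdivrMr // (le_trans rate) // ler_wpM2l // lerDl ltW //.
by rewrite (le_trans _ n_ge0) // mulr_ge0_le0 ?invr_le0 // divr_ge0 // ltW.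
Qed.

Theorem corollary1 (R : realType) (X K M : finType) (N : nat)
  (P : X -> R) (d : X -> X -> R) (D : R)
  (f : N.-tuple X -> M -> K -> N.-tuple X) (phi : N.-tuple X -> K -> M) :
  (0 < N)%N -> (0 < #|M|)%N -> (0 < #|K|)%N ->
  is_distr P ->
  (forall x y, 0 <= d x y) ->
  avg_distortion f P d <= D ->
  (forall eps : R, 0 < eps -> error_prob f phi P <= eps) ->
  forall eps : R, 0 < eps ->
  (forall n0, is_unicity_distance (spurious_kc f P) n0 ->
     (entropy (uniform R K) / N%:R) /
       (hiding_capacity P d D - entropy (uniform R M) / N%:R + eps) <= n0%:R)
  /\
  (forall n1, is_unicity_distance (spurious_so f P) n1 ->
     exists n0, is_unicity_distance (spurious_kc f P) n0 /\ (n0 <= n1)%N).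
Proof.
move=> N_gt0 M_gt0 K_gt0 P_distr _ distortion_le small_err eps eps_gt0; split.
  move=> n0 [S0 _].
  have entropy_le := spurious_kc_eq0_entropy_le N_gt0 M_gt0 K_gt0 P_distr small_err S0.
  have admissible := code_channel_admissible N_gt0 M_gt0 K_gt0 P_distr distortion_le.
  have capacity_ge := cond_entropy_le_capacity P_distr admissible.
  rewrite !entropy_uniform //; apply: rate_ratio_le => //.
  - by rewrite log2_ge0 // ler1n.
  - by rewrite ltr0n.
  - by apply: (le_trans entropy_le); rewrite ler_wpM2l // ler_wpM2l.
move=> n1 [S1 _].
have S1_kc : spurious_kc f P n1 == 0.
  by rewrite eq_le spurious_kc_ge0 // andbT -S1 spurious_kc_le_so.
have kc_zero : exists n, spurious_kc f P n == 0 by exists n1.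
have [n0 /eqP S0 n0_min] := ex_minnP kc_zero.
exists n0; split; last exact: n0_min.
by split=> // m /eqP; exact: n0_min.
Qed.
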